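(* Let $(\Lambda,\mathcal{G}_\Lambda)$ be a labeled graph all of whose vertex groups are directly-indecomposable cyclic groups, and let $u$ be a CP element of $W(\Lambda)$. Then the centralizer of $u$ in $W(\Lambda)$ equals $W(\mathrm{st}(u))$, i.e. $C_{W(\Lambda)}(u)=W(\mathrm{st}(u))$.
   Context: A labeled graph $(\Lambda,\mathcal{G}_\Lambda)$ consists of a nonempty finite simplicial graph $\Lambda$ with vertex set $V_\Lambda$ and a family $\mathcal{G}_\Lambda=\{G_v\}_{v\in V_\Lambda}$ of nontrivial groups. Its graph product $W(\Lambda)=W(\Lambda,\mathcal{G}_\Lambda)$ is the quotient of the free product $\ast_{v\in V_\Lambda}G_v$ by the relations $gh=hg$ for all $g\in G_v$, $h\in G_{v'}$ with $v,v'$ adjacent in $\Lambda$. For a full subgraph $\Theta$ of $\Lambda$, $W(\Theta)$ denotes the subgroup of $W(\Lambda)$ generated by the images of the $G_v$, $v\in V_\Theta$. A cyclic group is primary if it has prime-power order, and directly-indecomposable if it is infinite or primary. When all vertex groups are cyclic, a generator of each $G_v$ is fixed and also denoted $v$; words are words in the alphabet $V_\Lambda^{\pm1}$, and a word is reduced if no shorter word represents the same element of $W(\Lambda)$. For $g\in W(\Lambda)$, $\mathrm{supp}(g)$ is the set of vertices $v$ such that $v$ or $v^{-1}$ appears in some reduced word representing $g$. An element $u\in W(\Lambda)$ is a CP element if $u\in W(\Delta)$ for some complete subgraph $\Delta$ of $\Lambda$. For such $u$, $\mathrm{st}(u)$ denotes the full subgraph of $\Lambda$ spanned by $\mathrm{supp}(u)$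 together with all vertices adjacent to every vertex of $\mathrm{supp}(u)$. *)

From mathcomp Require Import all_boot.
Set Implicit Arguments. Unset Strict Implicit. Unset Printing Implicit Defensive.

(* A letter (v, false) is the generator v, (v, true) is v^{-1}.
   The cyclic vertex group G_v has order [ord v], with [ord v = 0] meaning
   infinite cyclic.  [e] is the adjacency relation of the simplicial graph. *)
Definition letter (V : finType) := (V * bool)%type.

(* Defining relations of W(Lambda) as a monoid presentation on V^{+-1}. *)
Inductive gp_rel (V : finType) (e : rel V) (ord : V -> nat) :
    seq (letter V) -> seq (letter V) -> Prop :=
| gp_rel_inv : forall v b, gp_rel e ord [:: (v, b); (v, ~~ b)] [::]
| gp_rel_ord : forall v, 0 < ord v -> gp_rel e ord (nseq (ord v) (v, false)) [::]
| gp_rel_comm : forall v w b c, e v w ->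
    gp_rel e ord [:: (v, b); (w, c)] [:: (w, c); (v, b)].

Inductive gp_eq (V : finType) (e : rel V) (ord : V -> nat) :
    seq (letter V) -> seq (letter V) -> Prop :=
| gp_eq_refl : forall w, gp_eq e ord w w
| gp_eq_sym : forall w1 w2, gp_eq e ord w1 w2 -> gp_eq e ord w2 w1
| gp_eq_trans : forall w1 w2 w3,
    gp_eq e ord w1 w2 -> gp_eq e ord w2 w3 -> gp_eq e ord w1 w3
| gp_eq_ctx : forall s t x y, gp_rel e ord x y ->
    gp_eq e ord (s ++ x ++ t) (s ++ y ++ t).

Definition reduced (V : finType) (e : rel V) (ord : V -> nat) (w : seq (letter V)) :=
  forall w', gp_eq e ord w w' -> size w <= size w'.

Definition in_supp (V : finType) (e : rel V) (ord : V -> nat) (g : seq (letter V)) (v : V) :=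
  exists w, [/\ gp_eq e ord g w, reduced e ord w & v \in map fst w].

(* The element represented by g lies in W(Theta), Theta the full subgraph on P. *)
Definition in_W (V : finType) (e : rel V) (ord : V -> nat) (P : V -> Prop)
    (g : seq (letter V)) :=
  exists w, gp_eq e ord g w /\ forall x, x \in w -> P x.1.

Definition complete_sub (V : finType) (e : rel V) (P : V -> Prop) :=
  forall v w, P v -> P w -> v <> w -> e v w.

Definition CP_elt (V : finType) (e : rel V) (ord : V -> nat) (u : seq (letter V)) :=
  exists P : V -> Prop, complete_sub e P /\ in_W e ord P u.

Definition in_st (V : finType) (e : rel V) (ord : V -> nat) (u : seq (letter V)) (v : V) :=
  in_supp e ord u v \/ forall x, in_supp e ord u x -> e v x.

(* Directly-indecomposable cyclic: infinite, or of prime-power order p^k, k >= 1. *)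
Definition dir_indec_order (n : nat) :=
  n = 0 \/ exists p k, [/\ prime p, 0 < k & n = p ^ k].

From Stdlib Require Import ZArith Lia Classical.
From mathcomp Require Import all_boot.
Set Implicit Arguments. Unset Strict Implicit. Unset Printing Implicit Defensive.

(* We attach to
   each word w a normal form [NF w]: a reduced syllable sequence, i.e. a list of
   syllables (v, k) standing for v^k with k a nonzero exponent reduced modulo
   |G_v|, in which no syllable can be shuffled (across syllables of adjacent
   vertices) onto a later syllable of the same vertex.  [NF w] is computed by
   letting the letters of w act on syllable sequences; this action respects
   the defining relations up to shuffling, so the normal form is an invariant
   of the group element, and flattening [NF w] gives back w.  Consequently
   supp(g) is the vertex set of [NF g], and the support of a CP element u is a
   clique.  For the main inclusion C(u) <= W(st(u)), take g commuting with u: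
   a syllable of [NF g] with vertex in st(u) that shuffles to an end of [NF g]
   can be cancelled; when none can, the normal forms of g.u and u.g are the
   concatenations in both orders, and comparing them on two non-adjacent
   vertices shows that [NF g] is empty.  The converse inclusion holds because
   every vertex of st(u) commutes with every letter of the normal form of u. *)

Section GraphProduct.
Variables (V : finType) (e : rel V) (ord : V -> nat).

Local Notation eqw := (gp_eq e ord).
Local Notation word := (seq (letter V)).

Lemma eqw_refl (a : word) : eqw a a.
Proof. exact: gp_eq_refl. Qed.

Lemma eqw_sym (a b : word) : eqw a b -> eqw b a.
Proof. exact: gp_eq_sym. Qed.

Lemma eqw_trans (a b c : word) : eqw a b -> eqw b c -> eqw a c.
Proof. exact: gp_eq_trans. Qed.

Lemma eqw_rel (x y : word) : gp_rel e ord x y -> eqw x y.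
Proof. by move=> R; have := gp_eq_ctx [::] [::] R; rewrite /= !cats0. Qed.

Lemma eqw_ctx (s t x y : word) : eqw x y -> eqw (s ++ x ++ t) (s ++ y ++ t).
Proof.
elim=> [w|w1 w2 _ IH|w1 w2 w3 _ IH1 _ IH2|s' t' x' y' R].
- exact: eqw_refl.
- exact: eqw_sym.
- exact: eqw_trans IH2.
- by have := gp_eq_ctx (s ++ s') (t' ++ t) R; rewrite -!catA.
Qed.

Lemma eqw_cat (a a' b b' : word) : eqw a a' -> eqw b b' -> eqw (a ++ b) (a' ++ b').
Proof.
move=> Ha Hb; apply: (@eqw_trans _ (a' ++ b)).
  by have := eqw_ctx [::] b Ha.
by have := eqw_ctx a' [::] Hb; rewrite !cats0.
Qed.

Lemma eqw_cons l (a b : word) : eqw a b -> eqw (l :: a) (l :: b).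
Proof. exact: (eqw_cat (eqw_refl [:: l])). Qed.

Lemma eqw_swap (l m : letter V) : l.1 = m.1 \/ e l.1 m.1 -> eqw [:: l; m] [:: m; l].
Proof.
case: l m => [v b] [w c] /= [<-|H]; last exact: eqw_rel (gp_rel_comm ord b c H).
case: b; case: c => /=; try exact: eqw_refl.
- apply: (eqw_trans (eqw_rel (gp_rel_inv e ord v true))).
  exact: eqw_sym (eqw_rel (gp_rel_inv e ord v false)).
- apply: (eqw_trans (eqw_rel (gp_rel_inv e ord v false))).
  exact: eqw_sym (eqw_rel (gp_rel_inv e ord v true)).
Qed.

Lemma eqw_commute (a b : word) :
  (forall l m, l \in a -> m \in b -> l.1 = m.1 \/ e l.1 m.1) -> eqw (a ++ b) (b ++ a).
Proof.
elim: a => [|l a IH] H /=; first by rewrite cats0; exact: eqw_refl.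
have Hl : eqw (l :: b) (b ++ [:: l]).
  elim: b {IH} H => [|m b IHb] H /=; first exact: eqw_refl.
  apply: (@eqw_trans _ (m :: l :: b)).
    exact: eqw_cat (eqw_swap (H l m (mem_head _ _) (mem_head _ _))) (eqw_refl b).
  apply/eqw_cons/IHb => l' m' Hl' Hm'.
  by apply: H => //; rewrite in_cons Hm' orbT.
apply: (eqw_trans (eqw_cons l (IH _))).
  by move=> l' m Hl' Hm; apply: H => //; rewrite in_cons Hl' orbT.
by have := eqw_cat Hl (eqw_refl a); rewrite -catA.
Qed.

Definition winv (a : word) : word := rev (map (fun l => (l.1, ~~ l.2)) a).

Lemma winv_l (a : word) : eqw (winv a ++ a) [::].
Proof.
elim: a => [|[v b] a IH]; first exact: eqw_refl.
rewrite /winv /= rev_cons -cats1 -/(winv a) -catA /=.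
apply: eqw_trans IH.
have := eqw_ctx (winv a) a (eqw_rel (gp_rel_inv e ord v (~~ b))).
by rewrite negbK.
Qed.

Lemma winv_r (a : word) : eqw (a ++ winv a) [::].
Proof.
elim: a => [|[v b] a IH]; first exact: eqw_refl.
rewrite /winv /= rev_cons -cats1 -/(winv a) /=.
apply: (eqw_trans _ (eqw_rel (gp_rel_inv e ord v b))).
by have := eqw_ctx [:: (v, b)] [:: (v, ~~ b)] IH; rewrite /= -catA.
Qed.

Lemma cancel_l (a x y : word) : eqw (a ++ x) (a ++ y) -> eqw x y.
Proof.
move=> H; have := eqw_cat (eqw_refl (winv a)) H; rewrite !catA => H'.
have H1 := eqw_cat (winv_l a) (eqw_refl x).
have H2 := eqw_cat (winv_l a) (eqw_refl y).
exact: eqw_trans (eqw_sym H1) (eqw_trans H' H2).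
Qed.

Lemma cancel_r (a x y : word) : eqw (x ++ a) (y ++ a) -> eqw x y.
Proof.
move=> H; have := eqw_cat H (eqw_refl (winv a)); rewrite -!catA => H'.
have H1 := eqw_cat (eqw_refl x) (winv_r a); rewrite cats0 in H1.
have H2 := eqw_cat (eqw_refl y) (winv_r a); rewrite cats0 in H2.
exact: eqw_trans (eqw_sym H1) (eqw_trans H' H2).
Qed.

Definition commutes (a b : word) := eqw (a ++ b) (b ++ a).

Lemma commutes_eqw (a a' b : word) : eqw a a' -> commutes a b -> commutes a' b.
Proof.
move=> E H; apply: eqw_trans (eqw_cat (eqw_sym E) (eqw_refl b)) _.
exact: eqw_trans H (eqw_cat (eqw_refl b) E).
Qed.

Lemma commutes_cancel_l (x y u : word) :
  commutes x u -> commutes (x ++ y) u -> commutes y u.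
Proof.
rewrite /commutes => Hx Hxy; apply: (@cancel_l x); rewrite catA.
apply: eqw_trans Hxy _; rewrite !catA.
exact: eqw_cat (eqw_sym Hx) (eqw_refl y).
Qed.

Lemma commutes_cancel_r (x y u : word) :
  commutes x u -> commutes (y ++ x) u -> commutes y u.
Proof.
rewrite /commutes => Hx Hyx; apply: (@cancel_r x); rewrite -catA.
apply: eqw_trans (eqw_cat (eqw_refl y) (eqw_sym Hx)) _; rewrite catA.
by apply: eqw_trans Hyx _; rewrite catA; exact: eqw_refl.
Qed.

Definition pw (v : V) (k : Z) : word :=
  if (0 <=? k)%Z then nseq (Z.to_nat k) (v, false) else nseq (Z.to_nat (- k)) (v, true).

Lemma mem_pw v k l : l \in pw v k -> l.1 = v.
Proof. by rewrite /pw; case: ifP => _ /nseqP [-> _]. Qed.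

Definition lx (b : bool) : Z := if b then (-1)%Z else 1%Z.

Lemma pw_lx v b : pw v (lx b) = [:: (v, b)].
Proof. by case: b. Qed.

Lemma pw_succ v a : eqw ((v, false) :: pw v a) (pw v (a + 1)).
Proof.
rewrite /pw; case: (Z.leb_spec 0 a) => Ha.
- have -> : (0 <=? a + 1)%Z = true by apply/Z.leb_le; lia.
  have -> : Z.to_nat (a + 1) = (Z.to_nat a).+1 by lia.
  exact: eqw_refl.
- have -> : Z.to_nat (- a) = (Z.to_nat (- (a + 1))).+1 by lia.
  have -> : (if (0 <=? a + 1)%Z then nseq (Z.to_nat (a + 1)) (v, false)
             else nseq (Z.to_nat (- (a + 1))) (v, true)) = nseq (Z.to_nat (- (a + 1))) (v, true).
    case: (Z.leb_spec 0 (a + 1)) => H //.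
    have E1 : Z.to_nat (a + 1) = 0 by lia.
    have E2 : Z.to_nat (- (a + 1)) = 0 by lia.
    by rewrite E1 E2.
  by have := eqw_ctx [::] (nseq (Z.to_nat (- (a + 1))) (v, true))
    (eqw_rel (gp_rel_inv e ord v false)).
Qed.

Lemma pw_pred v a : eqw ((v, true) :: pw v a) (pw v (a - 1)).
Proof.
rewrite /pw; case: (Z.leb_spec 0 (a - 1)) => Ha.
- have -> : (0 <=? a)%Z = true by apply/Z.leb_le; lia.
  have -> : Z.to_nat a = (Z.to_nat (a - 1)).+1 by lia.
  by have := eqw_ctx [::] (nseq (Z.to_nat (a - 1)) (v, false))
    (eqw_rel (gp_rel_inv e ord v true)).
- have -> : Z.to_nat (- (a - 1)) = (Z.to_nat (- a)).+1 by lia.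
  case: (Z.leb_spec 0 a) => H; last exact: eqw_refl.
  have -> : a = 0%Z by lia.
  exact: eqw_refl.
Qed.

Lemma pw_add v a b : eqw (pw v a ++ pw v b) (pw v (a + b)).
Proof.
elim/Z.peano_ind: a => [|x IH|x IH]; first exact: eqw_refl.
- rewrite -Z.add_1_r.
  apply: (eqw_trans (eqw_cat (eqw_sym (pw_succ v x)) (eqw_refl _))).
  apply: (eqw_trans (eqw_cons _ IH)).
  rewrite (_ : x + 1 + b = (x + b) + 1)%Z; [exact: pw_succ|lia].
- rewrite -Z.sub_1_r.
  apply: (eqw_trans (eqw_cat (eqw_sym (pw_pred v x)) (eqw_refl _))).
  apply: (eqw_trans (eqw_cons _ IH)).
  rewrite (_ : x - 1 + b = (x + b) - 1)%Z; [exact: pw_pred|lia].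
Qed.

Definition nrm (n : nat) (x : Z) : Z := if n is 0 then x else (x mod Z.of_nat n)%Z.

Lemma nrm_nrm n x : nrm n (nrm n x) = nrm n x.
Proof. case: n => [|n] //=; apply: Z.mod_mod; lia. Qed.

Lemma nrm0 n : nrm n 0 = 0%Z.
Proof. case: n => [|n] //=; apply: Z.mod_0_l; lia. Qed.

Lemma nrm_addl n x y : nrm n (nrm n x + y) = nrm n (x + y).
Proof. case: n => [|n] //=; exact: Zplus_mod_idemp_l. Qed.

Lemma nrm_eq0_add n x y : nrm n x = 0%Z -> nrm n (x + y) = nrm n y.
Proof. by move=> H; rewrite -nrm_addl H. Qed.

Lemma nrm_ord v : nrm (ord v) (Z.of_nat (ord v)) = 0%Z.
Proof. case: (ord v) => [|n] //=; apply: Z.mod_same; lia. Qed.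

Lemma nrm_pos v k x : nrm (ord v) k = k -> (0 < x <= k)%Z -> nrm (ord v) x = x.
Proof.
rewrite /nrm; case: (ord v) => [|n] // Hk Hx.
have := Z.mod_pos_bound k (Z.of_nat n.+1); rewrite Hk => H.
apply: Z.mod_small; lia.
Qed.

Lemma nrm_neg v k : nrm (ord v) k = k -> (k < 0)%Z -> ord v = 0.
Proof.
rewrite /nrm; case: (ord v) => [|n] // Hk Hx.
have := Z.mod_pos_bound k (Z.of_nat n.+1); rewrite Hk => H; lia.
Qed.

Lemma pw_mult v q : 0 < ord v -> eqw (pw v (Z.of_nat (ord v) * q)) [::].
Proof.
move=> H.
have Hord : eqw (pw v (Z.of_nat (ord v))) [::].
  rewrite /pw; have -> : (0 <=? Z.of_nat (ord v))%Z = true by apply/Z.leb_le; lia.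
  by rewrite Nat2Z.id; exact: eqw_rel (gp_rel_ord e H).
elim/Z.peano_ind: q => [|x IH|x IH]; first by rewrite Z.mul_0_r; exact: eqw_refl.
- rewrite (_ : _ * Z.succ x = Z.of_nat (ord v) + Z.of_nat (ord v) * x)%Z; last by lia.
  exact: eqw_trans (eqw_sym (pw_add _ _ _)) (eqw_cat Hord IH).
- apply: (eqw_trans _ IH).
  rewrite (_ : _ * x = Z.of_nat (ord v) * Z.pred x + Z.of_nat (ord v))%Z; last by lia.
  apply: (eqw_trans _ (pw_add _ _ _)).
  by have := eqw_cat (eqw_refl (pw v (Z.of_nat (ord v) * Z.pred x))) (eqw_sym Hord);
    rewrite cats0.
Qed.

Lemma pw_nrm v k : eqw (pw v k) (pw v (nrm (ord v) k)).
Proof.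
rewrite /nrm; case E: (ord v) => [|n]; first exact: eqw_refl.
have H : 0 < ord v by rewrite E.
have n0 : Z.of_nat n.+1 <> 0%Z by lia.
rewrite {1}(Z.div_mod k (Z.of_nat n.+1) n0).
apply: (eqw_trans (eqw_sym (pw_add _ _ _))).
have := eqw_cat (pw_mult (k / Z.of_nat n.+1) H) (eqw_refl (pw v (k mod Z.of_nat n.+1))).
by rewrite E.
Qed.

(* Deleting all letters outside a set of vertices is a homomorphism
   (the retraction of W(Lambda) onto a full subgraph group). *)
Lemma eqw_filter (P : pred V) w1 w2 : eqw w1 w2 ->
  eqw (filter (fun l => P l.1) w1) (filter (fun l => P l.1) w2).
Proof.
elim=> [w|a b _ IH|a b c _ IH1 _ IH2|s t x y Rel].
- exact: eqw_refl.
- exact: eqw_sym.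
- exact: eqw_trans IH2.
- rewrite !filter_cat; apply: eqw_ctx.
  case: Rel => [v b|v Hv|v w b c Hvw] /=.
  + by case: (P v) => /=; [exact: eqw_rel (gp_rel_inv e ord v b)|exact: eqw_refl].
  + rewrite filter_nseq /=; case: (P v); rewrite ?mul1n ?mul0n /=;
      [exact: eqw_rel (gp_rel_ord e Hv)|exact: eqw_refl].
  + case: (P v); case: (P w) => /=; try exact: eqw_refl.
    exact: eqw_rel (gp_rel_comm ord b c Hvw).
Qed.

Lemma exists_reduced w : exists w', eqw w w' /\ reduced e ord w'.
Proof.
elim: {w}(size w) {-2}w (leqnn (size w)) => [|n IH] w Hw.
  by exists w; split=> [|w' _]; [exact: eqw_refl|case: w Hw].
case: (classic (reduced e ord w)) => Hr; first by exists w; split=> //; exact: eqw_refl.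
have [w' [E Hs]] : exists w', eqw w w' /\ size w' < size w.
  apply: NNPP => Hn; apply: Hr => w' E; rewrite leqNgt; apply/negP => Hlt.
  by apply: Hn; exists w'.
have [w'' [E' R']] := IH w' (leq_trans Hs Hw).
by exists w''; split=> //; exact: eqw_trans E'.
Qed.

Hypothesis Hsym : symmetric e.
Hypothesis Hirr : irreflexive e.
Hypothesis Hord1 : forall v, ord v <> 1.

Lemma adj_neq v x : e v x -> (x == v) = false.
Proof. by apply: contraTF => /eqP ->; rewrite Hirr. Qed.

(* Since G_v is nontrivial, a single letter is a syllable in canonical form. *)
Lemma nrm1 v : nrm (ord v) 1 = 1%Z.
Proof.
have := @Hord1 v; case: (ord v) => [|n] //= H; apply: Z.mod_small.
by case: n H => [|n] // _; lia.
Qed.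

Definition syl := (V * Z)%type.

Definition flat (r : seq syl) : word := flatten (map (fun c => pw c.1 c.2) r).

Lemma flat_cat (r1 r2 : seq syl) : flat (r1 ++ r2) = flat r1 ++ flat r2.
Proof. by rewrite /flat map_cat flatten_cat. Qed.

Lemma flat_cons (c : syl) r : flat (c :: r) = pw c.1 c.2 ++ flat r.
Proof. by []. Qed.

Lemma mem_flat l r : l \in flat r -> l.1 \in map fst r.
Proof.
elim: r => [|c r IH] //; rewrite flat_cons mem_cat => /orP [/mem_pw ->|/IH H] /=.
- exact: mem_head.
- by rewrite in_cons H orbT.
Qed.

(* [reach v s]: v occurs in the vertex list s after a prefix consisting of
   neighbours of v, so that a syllable at v placed before s can be shuffled
   onto that occurrence. *)
Fixpoint reach (v : V) (s : seq V) : bool :=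
  if s is x :: s' then (x == v) || (e v x && reach v s') else false.

Lemma reach_cat v s t : reach v (s ++ t) = reach v s || (all (e v) s && reach v t).
Proof.
elim: s => [|x s IH] //=; rewrite IH.
by case: (x == v); case: (e v x); case: (reach v s).
Qed.

Lemma reach_mem v s : reach v s -> v \in s.
Proof.
elim: s => [|x s IH] //= /orP [/eqP ->|/andP [_ H]]; first exact: mem_head.
by rewrite in_cons IH ?orbT.
Qed.

Lemma all_adj_notin v s : all (e v) s -> v \notin s.
Proof. by apply: contraTN => H; apply/allPn; exists v => //; rewrite Hirr. Qed.

Lemma reach_adj v s t : all (e v) s -> reach v (s ++ t) = reach v t.
Proof.
move=> H; rewrite reach_cat H /=.
by case R: (reach v s) => //; have := all_adj_notin H; rewrite (reach_mem R).
Qed.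

Lemma reachP v (r : seq syl) : reach v (map fst r) ->
  exists p k q, r = p ++ (v, k) :: q /\ all (e v) (map fst p).
Proof.
elim: r => [|[x k] r IH] //= /orP [/eqP ->|/andP [Hx /IH [p [k' [q [-> Hp]]]]]].
- by exists [::], k, r.
- by exists ((x, k) :: p), k', q; rewrite /= Hx.
Qed.

Lemma reach_swap v x y s : e x y -> reach v (x :: y :: s) = reach v (y :: x :: s).
Proof.
move=> Hxy /=; have Nyx := adj_neq Hxy.
case Ex: (x == v); case Ey: (y == v) => /=.
- by move: Nyx; rewrite (eqP Ex) (eqP Ey) eqxx.
- by rewrite -(eqP Ex) Hxy.
- by rewrite -(eqP Ey) Hsym Hxy.
- by case: (e v x); case: (e v y).
Qed.

Definition valid_syl (c : syl) : bool := ~~ (c.2 =? 0)%Z && (nrm (ord c.1) c.2 =? c.2)%Z.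

Fixpoint reduced_syl (r : seq syl) : bool :=
  if r is c :: r' then [&& valid_syl c, ~~ reach c.1 (map fst r') & reduced_syl r'] else true.

Lemma valid_syl_nrm v x : ~~ (nrm (ord v) x =? 0)%Z -> valid_syl (v, nrm (ord v) x).
Proof. by move=> H; rewrite /valid_syl /= H nrm_nrm Z.eqb_refl. Qed.

Lemma valid_sylP v k : valid_syl (v, k) -> nrm (ord v) k = k /\ k <> 0%Z.
Proof.
case/andP => /= /negP H /Z.eqb_eq ->; split=> // E.
by apply: H; apply/Z.eqb_eq.
Qed.

Lemma reduced_syl_split (p q : seq syl) c : reduced_syl (p ++ c :: q) ->
  [&& valid_syl c, ~~ reach c.1 (map fst q) & reduced_syl q].
Proof. by elim: p => [|x p IH] //= /and3P [_ _ /IH]. Qed.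

Lemma reduced_syl_suffix (p q : seq syl) : reduced_syl (p ++ q) -> reduced_syl q.
Proof. by elim: p => [|x p IH] //= /and3P [_ _ /IH]. Qed.

Lemma reduced_syl_prefix (p q : seq syl) : reduced_syl (p ++ q) -> reduced_syl p.
Proof.
elim: p => [|c p IH] //= /and3P [Hc Hr /IH ->]; rewrite Hc andbT.
by move: Hr; rewrite map_cat reach_cat negb_or => /andP [].
Qed.

Lemma reduced_syl_congr (p t t' : seq syl) : reduced_syl (p ++ t) -> reduced_syl t' ->
  all (fun c => reach c.1 (map fst t) == reach c.1 (map fst t')) p -> reduced_syl (p ++ t').
Proof.
elim: p => [|c p IH] //= /and3P [Hc Hr Hp] Ht' /andP [/eqP E Hall].
rewrite Hc IH //= andbT; move: Hr; by rewrite !map_cat !reach_cat E.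
Qed.

Lemma reduced_syl_cat (p t : seq syl) : reduced_syl t ->
  (forall p1 c p2, p = p1 ++ c :: p2 -> valid_syl c && ~~ reach c.1 (map fst (p2 ++ t))) ->
  reduced_syl (p ++ t).
Proof.
elim: p => [|c p IH] //= Ht H.
have /andP [-> ->] := H [::] c p erefl.
by rewrite IH // => p1 c' p2 E; apply: (H (c :: p1)); rewrite E.
Qed.

Inductive shuffle1 : seq syl -> seq syl -> Prop :=
| shuffle1_swap (p q : seq syl) (a b : syl) :
    e a.1 b.1 -> shuffle1 (p ++ a :: b :: q) (p ++ b :: a :: q).

Inductive shuffle : seq syl -> seq syl -> Prop :=
| shuffle_refl r : shuffle r r
| shuffle_step r1 r2 r3 : shuffle1 r1 r2 -> shuffle r2 r3 -> shuffle r1 r3.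

Lemma shuffle_of1 r1 r2 : shuffle1 r1 r2 -> shuffle r1 r2.
Proof. by move=> H; apply: shuffle_step H (shuffle_refl _). Qed.

Lemma shuffle_trans r1 r2 r3 : shuffle r1 r2 -> shuffle r2 r3 -> shuffle r1 r3.
Proof. by elim=> // a b c H _ IH /IH; apply: shuffle_step. Qed.

Lemma shuffle_sym r1 r2 : shuffle r1 r2 -> shuffle r2 r1.
Proof.
elim=> [r|a b c [p q x y Hxy] _ IH]; first exact: shuffle_refl.
by apply: shuffle_trans IH (shuffle_of1 _); apply: shuffle1_swap; rewrite Hsym.
Qed.

Lemma shuffle_pre p r1 r2 : shuffle r1 r2 -> shuffle (p ++ r1) (p ++ r2).
Proof.
elim=> [r|a b c [p' q x y Hxy] _ IH]; first exact: shuffle_refl.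
by apply: shuffle_step IH; rewrite !catA; apply: shuffle1_swap.
Qed.

Lemma shuffle_front (p q : seq syl) c :
  all (e c.1) (map fst p) -> shuffle (p ++ c :: q) (c :: p ++ q).
Proof.
elim: p => [|x p IH] /=; first by move=> _; exact: shuffle_refl.
case/andP => Hx Hp.
apply: shuffle_trans (shuffle_pre [:: x] (IH Hp)) _.
by apply: shuffle_of1; apply: (@shuffle1_swap [::] (p ++ q) x c); rewrite Hsym.
Qed.

Lemma shuffle_back (p q : seq syl) c :
  all (e c.1) (map fst q) -> shuffle (p ++ c :: q) (p ++ q ++ [:: c]).
Proof.
elim: q p => [|x q IH] p /=; first by move=> _; exact: shuffle_refl.
case/andP => Hx Hq.
apply: shuffle_step (shuffle1_swap p q Hx) _.
by have := IH (p ++ [:: x]) Hq; rewrite -!catA.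
Qed.

Lemma shuffle_reduced_syl r1 r2 : shuffle r1 r2 -> reduced_syl r1 -> reduced_syl r2.
Proof.
elim=> // r1' r2' r3 [p q a b Hab] _ IH H; apply: IH.
have Hba : e b.1 a.1 by rewrite Hsym.
have Hb : reduced_syl (b :: a :: q).
  move: (reduced_syl_suffix H) => /= /and3P [Ha Hra /and3P [Hb Hrb Hq]].
  rewrite (adj_neq Hab) Hab /= in Hra.
  by rewrite Ha Hb Hq (adj_neq Hba) Hba /= Hrb Hra.
apply: (reduced_syl_congr H Hb).
elim: p {H} => //= c p ->.
by have := reach_swap c.1 (map fst q) Hab => /= ->; rewrite eqxx.
Qed.

Lemma shuffle_mem r1 r2 : shuffle r1 r2 -> map fst r1 =i map fst r2.
Proof.
elim=> // a b c H _ IH x; rewrite -IH; case: H => p q a' b' _.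
rewrite !map_cat !mem_cat !in_cons.
by case: (x \in map fst p); case: (x == a'.1); case: (x == b'.1).
Qed.

Lemma shuffle_filter (P : pred V) r1 r2 : (forall x y, P x -> P y -> ~~ e x y) ->
  shuffle r1 r2 -> filter (fun c => P c.1) r1 = filter (fun c => P c.1) r2.
Proof.
move=> HP; elim=> // a b c H _ <-; case: H => p q a' b' Hab.
rewrite !filter_cat /=; case Pa: (P a'.1); case Pb: (P b'.1) => //.
by move: (HP _ _ Pa Pb); rewrite Hab.
Qed.

Lemma flat_shuffle r1 r2 : shuffle r1 r2 -> eqw (flat r1) (flat r2).
Proof.
elim=> [r|a b c [p q x y Hxy] _ IH]; first exact: eqw_refl.
apply: eqw_trans IH; rewrite !flat_cat !flat_cons.
apply: eqw_cat (eqw_refl _) _; rewrite !catA; apply: eqw_cat _ (eqw_refl _).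
by apply: eqw_commute => l m /mem_pw -> /mem_pw ->; right.
Qed.

Definition push (v : V) (x : Z) (q : seq syl) : seq syl :=
  if (nrm (ord v) x =? 0)%Z then q else (v, nrm (ord v) x) :: q.

Fixpoint absorb (v : V) (d : Z) (r : seq syl) : seq syl :=
  if r is c :: r' then
    (if c.1 == v then push v (c.2 + d) r' else c :: absorb v d r')
  else [::].

Definition act (v : V) (d : Z) (r : seq syl) : seq syl :=
  if reach v (map fst r) then absorb v d r else push v d r.

Lemma push_nrm v x y q : nrm (ord v) x = nrm (ord v) y -> push v x q = push v y q.
Proof. by rewrite /push => ->. Qed.

Lemma absorb_cat v d (s t : seq syl) : absorb v d (s ++ t) =
  if v \in map fst s then absorb v d s ++ t else s ++ absorb v d t.
Proof.
elim: s => [|c s IH] //=; rewrite in_cons eq_sym.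
case: (v == c.1) => /=; first by rewrite /push; case: ifP.
by rewrite IH; case: (v \in map fst s).
Qed.

Lemma absorb_reach v d (p q : seq syl) k : all (e v) (map fst p) ->
  absorb v d (p ++ (v, k) :: q) = p ++ push v (k + d) q.
Proof. by move=> H; rewrite absorb_cat (negPf (all_adj_notin H)) /= eqxx. Qed.

Lemma act_reach v d (p q : seq syl) k : all (e v) (map fst p) ->
  act v d (p ++ (v, k) :: q) = p ++ push v (k + d) q.
Proof.
move=> H; rewrite /act absorb_reach // map_cat reach_adj //=.
by rewrite eqxx.
Qed.

Lemma act_noreach v d r : ~~ reach v (map fst r) -> act v d r = push v d r.
Proof. by rewrite /act => /negPf ->. Qed.

Lemma reach_push_adj v w x (s : seq syl) : e v w ->
  reach v (map fst (push w x s)) = reach v (map fst s).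
Proof. by move=> H; rewrite /push; case: ifP => //= _; rewrite (adj_neq H) H. Qed.

Lemma reach_act_adj v w b r : e v w ->
  reach v (map fst (act w b r)) = reach v (map fst r).
Proof.
move=> H; rewrite /act; case: ifP => _; last exact: reach_push_adj.
elim: r => [|c s IH] //=.
case: (eqVneq c.1 w) => [E|_] /=; last by rewrite IH.
by rewrite reach_push_adj // E (adj_neq H) H.
Qed.

Lemma act_reduced_syl v d r : reduced_syl r -> reduced_syl (act v d r).
Proof.
have push_ok q : ~~ reach v (map fst q) -> reduced_syl q -> forall x, reduced_syl (push v x q).
  by move=> Rq Hq x; rewrite /push; case: ifP => // N /=; rewrite valid_syl_nrm ?N ?Rq.
move=> Hr; case R: (reach v (map fst r)); last by rewrite act_noreach ?R ?push_ok ?R.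
have [p [k [q [Er Hp]]]] := reachP R; subst r.
have /and3P [_ Hq Hqr] := reduced_syl_split Hr.
rewrite act_reach //; apply: (reduced_syl_congr Hr (push_ok _ Hq Hqr _)).
elim: p Hp {Hr R} => //= c p IH /andP [Hc Hp]; rewrite IH // andbT.
have Hc' : e c.1 v by rewrite Hsym.
by rewrite (adj_neq Hc') Hc' reach_push_adj.
Qed.

Lemma act_shuffle v d r1 r2 : shuffle r1 r2 -> shuffle (act v d r1) (act v d r2).
Proof.
elim=> [r|r1' r2' r3 [p q a b Hab] _ IH]; first exact: shuffle_refl.
apply: shuffle_trans IH.
have Er : reach v (map fst (p ++ a :: b :: q)) = reach v (map fst (p ++ b :: a :: q)).
  by rewrite !map_cat !reach_cat; congr (_ || (_ && _)); exact: reach_swap.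
rewrite /act -Er; case: ifP => _.
- rewrite !absorb_cat; case: ifP => _; first exact: shuffle_of1 (shuffle1_swap _ _ Hab).
  apply: shuffle_pre => /=.
  case: (eqVneq a.1 v) => [Ea|Na].
  + rewrite (_ : (b.1 == v) = false) /=; last by rewrite -Ea (adj_neq Hab).
    rewrite /push; case: ifP => _; first exact: shuffle_refl.
    have H' : e v b.1 by rewrite -Ea.
    exact: shuffle_of1 (@shuffle1_swap [::] q (v, _) b H').
  + case: (eqVneq b.1 v) => [Eb|Nb]; last exact: shuffle_of1 (shuffle1_swap [::] _ Hab).
    rewrite /push; case: ifP => _; first exact: shuffle_refl.
    have H' : e a.1 v by rewrite -Eb.
    exact: shuffle_of1 (@shuffle1_swap [::] q a (v, _) H').
- rewrite /push; case: ifP => _; first exact: shuffle_of1 (shuffle1_swap _ _ Hab).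
  exact: shuffle_of1 (shuffle1_swap ((v, nrm (ord v) d) :: p) _ Hab).
Qed.

Lemma act_comp v a b r : reduced_syl r -> shuffle (act v a (act v b r)) (act v (b + a) r).
Proof.
move=> Hr; case R: (reach v (map fst r)).
- have [p [k [q [Er Hp]]]] := reachP R; subst r.
  have /and3P [_ Hq _] := reduced_syl_split Hr.
  rewrite !act_reach //.
  case N: (nrm (ord v) (k + b) =? 0)%Z.
  + have -> : push v (k + b) q = q by rewrite /push N.
    rewrite /act map_cat reach_adj // (negPf Hq) (push_nrm _ (y := a)); last first.
      by rewrite Z.add_assoc nrm_eq0_add //; apply/Z.eqb_eq.
    rewrite /push; case: ifP => _; first exact: shuffle_refl.
    by apply: shuffle_sym; apply: shuffle_front.
  + have -> : push v (k + b) q = (v, nrm (ord v) (k + b)) :: q by rewrite /push N.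
    rewrite act_reach // (push_nrm _ (y := k + (b + a))).
      exact: shuffle_refl.
    by rewrite nrm_addl Z.add_assoc.
- have R' : ~~ reach v (map fst r) by rewrite R.
  rewrite !(act_noreach _ R'); case N: (nrm (ord v) b =? 0)%Z.
  + have -> : push v b r = r by rewrite /push N.
    rewrite act_noreach // (push_nrm _ (y := b + a)); first exact: shuffle_refl.
    by rewrite nrm_eq0_add //; apply/Z.eqb_eq.
  + have -> : push v b r = (v, nrm (ord v) b) :: r by rewrite /push N.
    rewrite (@act_reach v a [::] r) // (push_nrm _ (y := b + a)); first exact: shuffle_refl.
    by rewrite nrm_addl.
Qed.

Lemma act0 v d r : reduced_syl r -> nrm (ord v) d = 0%Z -> act v d r = r.
Proof.
move=> Hr Hd; case R: (reach v (map fst r)); last by rewrite act_noreach ?R // /push Hd.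
have [p [k [q [Er Hp]]]] := reachP R; subst r.
have /and3P [Hk _ _] := reduced_syl_split Hr.
have [Nk Kk] := valid_sylP Hk.
rewrite act_reach // /push Z.add_comm nrm_eq0_add // Nk.
by case: ifP => // /Z.eqb_eq.
Qed.

Lemma absorb_push v w a b r : v != w -> absorb v a (push w b r) = push w b (absorb v a r).
Proof. by move=> H; rewrite /push; case: ifP => //= _; rewrite eq_sym (negPf H). Qed.

Lemma absorb_comm v w a b r : v != w ->
  absorb v a (absorb w b r) = absorb w b (absorb v a r).
Proof.
move=> H; elim: r => [|c r IH] //=.
case: (eqVneq c.1 w) => [Ew|Nw].
- rewrite absorb_push // (_ : (c.1 == v) = false) /=; last by rewrite Ew eq_sym (negPf H).
  by rewrite Ew eqxx.
- case: (eqVneq c.1 v) => [Ev|Nv] /=.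
  + by rewrite -absorb_push 1?eq_sym // Ev eqxx.
  + by rewrite (negPf Nw) (negPf Nv) IH.
Qed.

Lemma act_comm v w a b r : e v w -> shuffle (act v a (act w b r)) (act w b (act v a r)).
Proof.
move=> H; have Hw : e w v by rewrite Hsym.
have Nvw : v != w by rewrite eq_sym adj_neq.
have Ev := reach_act_adj b r H; have Ew := reach_act_adj a r Hw.
rewrite {1}/act Ev {3}/act Ew /act.
case: (reach v (map fst r)); case: (reach w (map fst r)).
- rewrite absorb_comm //; exact: shuffle_refl.
- rewrite absorb_push //; exact: shuffle_refl.
- rewrite absorb_push 1?eq_sym //; exact: shuffle_refl.
- rewrite /push; case: ifP => _; case: ifP => _; try exact: shuffle_refl.
  exact: shuffle_of1 (@shuffle1_swap [::] r (v, _) (w, _) H).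
Qed.

Definition actw (w : word) (r : seq syl) := foldr (fun l => act l.1 (lx l.2)) r w.

Lemma actw_cat a b r : actw (a ++ b) r = actw a (actw b r).
Proof. exact: foldr_cat. Qed.

Lemma actw_reduced_syl w r : reduced_syl r -> reduced_syl (actw w r).
Proof. by elim: w => //= l w IH /IH; apply: act_reduced_syl. Qed.

Lemma actw_shuffle w r1 r2 : shuffle r1 r2 -> shuffle (actw w r1) (actw w r2).
Proof. by elim: w => //= l w IH /IH; apply: act_shuffle. Qed.

Lemma actw_nseq v j r : reduced_syl r ->
  shuffle (actw (nseq j (v, false)) r) (act v (Z.of_nat j) r).
Proof.
move=> Hr; elim: j => [|j IH] /=; first by rewrite act0 ?nrm0 //; exact: shuffle_refl.
apply: shuffle_trans (act_shuffle _ _ IH) _.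
rewrite (_ : Z.pos (Pos.of_succ_nat j) = (Z.of_nat j + 1)%Z); last by lia.
exact: act_comp.
Qed.

(* The action of words factors through W(Lambda), up to shuffling: each
   defining relation acts trivially. *)
Lemma actw_eqw w1 w2 : eqw w1 w2 ->
  forall r, reduced_syl r -> shuffle (actw w1 r) (actw w2 r).
Proof.
elim=> [w|a b _ IH|a b c _ IH1 _ IH2|s t x y Rel] r Hr.
- exact: shuffle_refl.
- exact: shuffle_sym (IH r Hr).
- exact: shuffle_trans (IH1 r Hr) (IH2 r Hr).
- rewrite !actw_cat; apply: actw_shuffle.
  have := actw_reduced_syl t Hr; move: (actw t r) => T HT.
  case: Rel => [v b|v Hv|v w b c Hvw] /=.
  + apply: shuffle_trans (act_comp _ _ _ HT) _.
    rewrite (_ : lx (~~ b) + lx b = 0)%Z; last by case: b.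
    by rewrite act0 ?nrm0 //; exact: shuffle_refl.
  + apply: shuffle_trans (actw_nseq _ _ HT) _.
    by rewrite act0 ?nrm_ord //; exact: shuffle_refl.
  + exact: act_comm.
Qed.

Lemma flat_push v x q : flat (push v x q) = pw v (nrm (ord v) x) ++ flat q.
Proof. by rewrite /push; case: ifP => // /Z.eqb_eq ->. Qed.

Lemma flat_act v d r : eqw (flat (act v d r)) (pw v d ++ flat r).
Proof.
case R: (reach v (map fst r)); last first.
  by rewrite act_noreach ?R // flat_push; exact: eqw_cat (eqw_sym (pw_nrm _ _)) (eqw_refl _).
have [p [k [q [-> Hp]]]] := reachP R.
rewrite act_reach // !flat_cat flat_cons flat_push.
apply: eqw_trans (_ : eqw _ (flat p ++ (pw v d ++ pw v k) ++ flat q)) _.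
  apply: eqw_cat (eqw_refl _) (eqw_cat _ (eqw_refl _)).
  apply: eqw_trans (eqw_sym (pw_nrm _ _)) _.
  by rewrite Z.add_comm; exact: eqw_sym (pw_add _ _ _).
have Hc : eqw (flat p ++ pw v d) (pw v d ++ flat p).
  apply: eqw_commute => l m /mem_flat Hl /mem_pw ->; right.
  by rewrite Hsym; move/allP: Hp; apply.
by have := eqw_cat Hc (eqw_refl (pw v k ++ flat q)); rewrite -!catA.
Qed.

Lemma flat_actw w r : eqw (flat (actw w r)) (w ++ flat r).
Proof.
elim: w => [|l w IH] /=; first exact: eqw_refl.
apply: eqw_trans (flat_act _ _ _) _.
rewrite (_ : pw l.1 (lx l.2) = [:: l]); last by case: l => v b; exact: pw_lx.
exact: eqw_cons IH.
Qed.

Lemma actw_pw v k t : valid_syl (v, k) -> ~~ reach v (map fst t) ->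
  actw (pw v k) t = (v, k) :: t.
Proof.
move=> /valid_sylP [Nk Kk] Rt; rewrite /pw; case: (Z.leb_spec 0 k) => Hk.
- suff H : forall j, 0 < j <= Z.to_nat k -> actw (nseq j (v, false)) t = (v, Z.of_nat j) :: t.
    by rewrite H ?Z2Nat.id //; apply/andP; split; apply/leP; lia.
  elim=> [|j IH] // /andP [_ /leP Hj] /=.
  case: j IH Hj => [|j] IH Hj; first by rewrite act_noreach // /push nrm1.
  rewrite IH; last by apply/andP; split=> //; apply/leP; lia.
  rewrite (@act_reach v 1 [::] t) // /push.
  have -> : nrm (ord v) (Z.pos (Pos.of_succ_nat j) + 1) = Z.pos (Pos.succ (Pos.of_succ_nat j)).
    by rewrite (nrm_pos (k := k)) //; lia.
  by [].
- have O := nrm_neg Nk Hk.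
  suff H : forall j, 0 < j -> actw (nseq j (v, true)) t = (v, - Z.of_nat j)%Z :: t.
    by rewrite H ?Z2Nat.id ?Z.opp_involutive //; [lia|apply/ltP; lia].
  elim=> [|j IH] // _ /=.
  case: j IH => [|j] IH; first by rewrite act_noreach // /push /nrm O.
  rewrite IH // (@act_reach v (-1) [::] t) // /push /nrm O.
  by rewrite /= Pos.add_1_r.
Qed.

Lemma actw_flat r t : reduced_syl (r ++ t) -> actw (flat r) t = r ++ t.
Proof.
elim: r => [|[v k] r IH] //= /and3P [Hc Hr Hrt].
by rewrite flat_cons actw_cat IH // actw_pw.
Qed.

Lemma verts_actw x w r :
  x \in map fst (actw w r) -> (x \in map fst w) || (x \in map fst r).
Proof.
have verts_push v y q : x \in map fst (push v y q) -> (x == v) || (x \in map fst q).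
  by rewrite /push; case: ifP => _ //= ->; rewrite orbT.
have verts_act v d s : x \in map fst (act v d s) -> (x == v) || (x \in map fst s).
  rewrite /act; case: ifP => _; last exact: verts_push.
  elim: s => [|c s IH] //=; case: eqP => [Ec|_].
  - by move/verts_push; rewrite in_cons Ec; case/orP => ->; rewrite ?orbT.
  - by rewrite /= !in_cons => /orP [->|/IH /orP [->|->]]; rewrite ?orbT.
elim: w => [|l w IH] //= /verts_act /orP [/eqP ->|/IH]; first by rewrite mem_head.
by case/orP => [H1|->]; rewrite ?orbT // in_cons H1 orbT.
Qed.

Definition NF (w : word) := actw w [::].

Lemma NF_reduced w : reduced_syl (NF w).
Proof. exact: actw_reduced_syl. Qed.

Lemma NF_flat w : eqw (flat (NF w)) w.
Proof. by have := flat_actw w [::]; rewrite cats0. Qed.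

Lemma NF_eqw w1 w2 : eqw w1 w2 -> shuffle (NF w1) (NF w2).
Proof. by move=> H; apply: actw_eqw. Qed.

Lemma NF_verts x w : x \in map fst (NF w) -> x \in map fst w.
Proof. by move/verts_actw; rewrite orbF. Qed.

Lemma NF_flat_reduced r t : reduced_syl (r ++ t) -> NF (flat r ++ flat t) = r ++ t.
Proof.
move=> H; have Et : actw (flat t) [::] = t.
  by have := @actw_flat t [::]; rewrite cats0; apply; exact: reduced_syl_suffix H.
by rewrite /NF actw_cat Et actw_flat.
Qed.

(* The support of an element is the vertex set of its normal form: a reduced
   word can be cut down to the vertices of the normal form by the retraction
   [eqw_filter] without changing the element, hence without shortening it;
   conversely the normal form of a reduced word only uses its vertices. *)
Lemma in_supp_NF g x : in_supp e ord g x <-> x \in map fst (NF g).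
Proof.
split; last first.
  move=> Hx; have [w [E R]] := exists_reduced g; exists w; split=> //.
  by apply: NF_verts; rewrite -(shuffle_mem (NF_eqw E)).
case=> w [E R M]; apply/negPn/negP => Nx.
pose P := fun y : V => y \in map fst (NF g).
have Ew : eqw w (flat (NF g)) := eqw_trans (eqw_sym E) (eqw_sym (NF_flat g)).
have Hw : eqw w (filter (fun l => P l.1) w).
  have := eqw_filter P Ew; rewrite (_ : filter _ (flat (NF g)) = flat (NF g)).
    by move=> H; exact: eqw_trans Ew (eqw_sym H).
  by apply/all_filterP/allP => l /mem_flat.
have : has (predC (fun l => P l.1)) w.
  by case/mapP: M => l Hl El; apply/hasP; exists l => //=; rewrite /P -El.
have := R _ Hw; rewrite size_filter has_count -(count_predC (fun l => P l.1) w).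
by rewrite leqNgt -{1}(addn0 (count _ w)) ltn_add2l => /negP.
Qed.

Lemma in_W_NF g (P : V -> Prop) : in_W e ord P g -> forall x, x \in map fst (NF g) -> P x.
Proof.
case=> w [E H] x; rewrite (shuffle_mem (NF_eqw E)) => /NF_verts /mapP [l Hl ->].
exact: H.
Qed.

Section Centraliser.
Variable u : word.
Hypothesis Hu : CP_elt e ord u.

Local Notation S := (map fst (NF u)).
Local Notation U := (flat (NF u)).

Lemma support_clique x y : x \in S -> y \in S -> x <> y -> e x y.
Proof.
have [P [HP HW]] := Hu.
by move=> Hx Hy N; apply: HP => //; apply: (in_W_NF HW).
Qed.

Definition stv x := (x \in S) || all (e x) S.

Lemma in_stP v : in_st e ord u v <-> stv v.
Proof.
rewrite /in_st /stv; split.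
- case=> [/in_supp_NF ->|H] //; apply/orP; right; apply/allP => x Hx.
  by apply: H; apply/in_supp_NF.
- case/orP => [/in_supp_NF H|/allP H]; [by left|right => x /in_supp_NF; exact: H].
Qed.

Lemma commutes_U (w : word) : (forall l, l \in w -> stv l.1) -> commutes w U.
Proof.
move=> H; apply: eqw_commute => l m /H + /mem_flat Hm.
rewrite /stv => /orP [Hl|/allP Hl]; last by right; apply: Hl.
case: (eqVneq l.1 m.1) => [|N]; first by left.
by right; apply: support_clique => //; apply/eqP.
Qed.

Lemma commutes_pw v k : stv v -> commutes (pw v k) U.
Proof. by move=> H; apply: commutes_U => l /mem_pw ->. Qed.

Lemma peel_front p c q : all (e c.1) (map fst p) -> stv c.1 ->
  reduced_syl (p ++ c :: q) -> commutes (flat (p ++ c :: q)) U ->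
  reduced_syl (p ++ q) /\ commutes (flat (p ++ q)) U.
Proof.
move=> Hp Hc Hr HU; have Hsh := shuffle_front q Hp.
split; first by case/and3P: (shuffle_reduced_syl Hsh Hr).
apply: (commutes_cancel_l (commutes_pw c.2 Hc)).
by rewrite -flat_cons; exact: commutes_eqw (flat_shuffle Hsh) HU.
Qed.

Lemma peel_back p c q : all (e c.1) (map fst q) -> stv c.1 ->
  reduced_syl (p ++ c :: q) -> commutes (flat (p ++ c :: q)) U ->
  reduced_syl (p ++ q) /\ commutes (flat (p ++ q)) U.
Proof.
move=> Hq Hc Hr HU; have Hsh := shuffle_back p Hq.
split; first by move: (shuffle_reduced_syl Hsh Hr); rewrite catA => /reduced_syl_prefix.
apply: (commutes_cancel_r (commutes_pw c.2 Hc)).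
by have := commutes_eqw (flat_shuffle Hsh) HU; rewrite catA flat_cat flat_cons cats0.
Qed.

Definition front_stuck (r : seq syl) :=
  forall p c q, r = p ++ c :: q -> all (e c.1) (map fst p) -> ~~ stv c.1.
Definition back_stuck (r : seq syl) :=
  forall p c q, r = p ++ c :: q -> all (e c.1) (map fst q) -> ~~ stv c.1.

Lemma reduced_NF_cat r : reduced_syl r -> front_stuck r -> reduced_syl (NF u ++ r).
Proof.
move=> Hr Hf; apply: reduced_syl_cat => // p1 c p2 E.
have Hc : c.1 \in S by rewrite E map_cat mem_cat /= in_cons eqxx orbT.
have := NF_reduced u; rewrite E => /reduced_syl_split /and3P [Vc Rc _].
rewrite Vc map_cat reach_cat negb_or Rc /=; apply/negP => /andP [_].
case/reachP => [p [k [q [Er Hp]]]].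
by have := Hf p (c.1, k) q Er Hp; rewrite /stv Hc.
Qed.

Lemma reduced_cat_NF r : reduced_syl r -> back_stuck r -> reduced_syl (r ++ NF u).
Proof.
move=> Hr Hb; apply: reduced_syl_cat; first exact: NF_reduced.
move=> p1 c p2 E; have := Hr; rewrite E => /reduced_syl_split /and3P [Vc Rc _].
rewrite Vc map_cat reach_cat negb_or Rc /=; apply/negP => /andP [Hp /reach_mem Hm].
by have := Hb p1 c p2 E Hp; rewrite /stv Hm.
Qed.

(* If no syllable can be peeled off, a reduced r commuting with U is empty:
   otherwise its first syllable c is not in st(u), so some s in supp(u) is
   not adjacent to c; but the normal forms NF u ++ r and r ++ NF u of the
   equal products must list their syllables at the non-adjacent vertices
   s and c.1 in the same order, and they start with s and with c
   respectively. *)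
Lemma stuck_nil r : reduced_syl r -> commutes (flat r) U ->
  front_stuck r -> back_stuck r -> r = [::].
Proof.
case: r => [|c r] // Hr HU Hf Hb; exfalso.
have := Hf [::] c r erefl isT; rewrite /stv negb_or => /andP [NcS /allPn [s Hs Nes]].
have Hsh : shuffle (NF u ++ c :: r) ((c :: r) ++ NF u).
  rewrite -(NF_flat_reduced (reduced_NF_cat Hr Hf)).
  rewrite -(NF_flat_reduced (reduced_cat_NF Hr Hb)).
  exact: NF_eqw (eqw_sym HU).
pose P x := (x == s) || (x == c.1).
have HP x y : P x -> P y -> ~~ e x y.
  by move=> /orP [] /eqP -> /orP [] /eqP ->; rewrite ?Hirr // Hsym.
have Pc : P c.1 by rewrite /P eqxx orbT.
have := shuffle_filter HP Hsh; rewrite !filter_cat /= Pc.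
have [d [Y [-> Hd]]] : exists d Y, filter (fun c => P c.1) (NF u) = d :: Y /\ d.1 \in S.
  elim: (NF u) Hs => [|d L IH] //=; rewrite in_cons.
  case Pd: (P d.1); first by exists d, (filter (fun c => P c.1) L); rewrite mem_head.
  case/orP => [/eqP E|/IH [d' [Y [-> Hd']]]]; first by move: Pd; rewrite -E /P eqxx.
  by exists d', Y; rewrite in_cons Hd' orbT.
by case=> Edc _; move: NcS; rewrite -Edc Hd.
Qed.

(* Main step: every vertex of a reduced sequence commuting with U lies in
   st(u).  By induction on the length: peel off a syllable if possible,
   otherwise the sequence is empty by [stuck_nil]. *)
Lemma commuting_in_st n r : size r <= n -> reduced_syl r -> commutes (flat r) U ->
  all stv (map fst r).
Proof.
elim: n r => [|n IH] r Hs Hr HU; first by case: r Hs {Hr HU}.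
apply/idPn => Hn.
have peeled p c q : r = p ++ c :: q -> stv c.1 ->
    reduced_syl (p ++ q) /\ commutes (flat (p ++ q)) U -> False.
  move=> Er Hc [Hr' HU']; move/negP: Hn; apply.
  have := IH _ _ Hr' HU'; rewrite Er !map_cat !all_cat /= Hc => -> //.
  by move: Hs; rewrite Er !size_cat /= addnS.
have Hf : front_stuck r.
  move=> p c q Er Hp; apply/negP => Hc; apply: (peeled p c q Er Hc).
  by move: Hr HU; rewrite Er; exact: peel_front.
have Hb : back_stuck r.
  move=> p c q Er Hq; apply/negP => Hc; apply: (peeled p c q Er Hc).
  by move: Hr HU; rewrite Er; exact: peel_back.
by move: Hn; rewrite (stuck_nil Hr HU Hf Hb).
Qed.

Lemma centraliser_sub_st g : commutes g u -> in_W e ord (in_st e ord u) g.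
Proof.
move=> Hc; exists (flat (NF g)); split; first exact: eqw_sym (NF_flat g).
move=> x /mem_flat Hx; apply/in_stP.
have Hc' : commutes (flat (NF g)) U.
  apply: commutes_eqw (eqw_sym (NF_flat g)) _; rewrite /commutes.
  apply: eqw_trans (eqw_cat (eqw_refl g) (NF_flat u)) _.
  exact: eqw_trans Hc (eqw_cat (eqw_sym (NF_flat u)) (eqw_refl g)).
by move/allP: (commuting_in_st (leqnn _) (NF_reduced g) Hc'); apply.
Qed.

Lemma st_sub_centraliser g : in_W e ord (in_st e ord u) g -> commutes g u.
Proof.
case=> w [E H].
have Hw : commutes w U by apply: commutes_U => l Hl; apply/in_stP; apply: H.
apply: commutes_eqw (eqw_sym E) _; rewrite /commutes.
apply: eqw_trans (eqw_cat (eqw_refl w) (eqw_sym (NF_flat u))) _.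
exact: eqw_trans Hw (eqw_cat (NF_flat u) (eqw_refl w)).
Qed.

End Centraliser.
End GraphProduct.

Lemma dir_indec_order_neq1 n : dir_indec_order n -> n <> 1.
Proof.
case=> [->|[p [[|k] [Hp _ ->]]]] //.
rewrite expnS => /eqP; rewrite muln_eq1 => /andP [/eqP E _].
by move: Hp; rewrite E.
Qed.

Theorem lemma2p2 (V : finType) (e : rel V) (ord : V -> nat)
  (HV : 0 < #|V|) (Hsym : symmetric e) (Hirr : irreflexive e)
  (Hord : forall v, dir_indec_order (ord v))
  (u : seq (letter V)) (Hu : CP_elt e ord u) :
  forall g : seq (letter V),
    gp_eq e ord (g ++ u) (u ++ g) <-> in_W e ord (in_st e ord u) g.
Proof.
have Hord1 v : ord v <> 1 by apply: dir_indec_order_neq1.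
move=> g; split.
- exact: (centraliser_sub_st Hsym Hirr Hord1 Hu).
- exact: (st_sub_centraliser Hsym Hirr Hu).
Qed.
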